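(* Let $\|\cdot\|_{F_n}$ ($n\ge1$) and $\|\cdot\|_F$ be $F$-norms on $\mathbb{R}^{d+1}$. Then $\|\mathbf{x}\|_{F_n}\to\|\mathbf{x}\|_F$ for every $\mathbf{x}\in\mathbb{R}^{d+1}$ if and only if $d_{H,\|\cdot\|}(S^+_{\|\cdot\|_{F_n}},S^+_{\|\cdot\|_F})\to0$, where $\|\cdot\|$ is any norm on $\mathbb{R}^{d+1}$.
   Context: Condition $(\mathcal{H})$ on $\mathbf{X}=(X_1,\dots,X_d)$: each $X_i$ is a.s. nonnegative with $0<E(X_i)<\infty$. For such $\mathbf{X}$ with distribution function $F$, $\|\mathbf{x}\|_F=E(\max(|x_0|,|x_1|X_1,\dots,|x_d|X_d))$; an $F$-norm is a norm on $\mathbb{R}^{d+1}$ of this form. For an $F$-norm, $S^+_{\|\cdot\|_F}:=\{\mathbf{x}\in[0,\infty)^{d+1}:\|\mathbf{x}\|_F=1\}$. For a norm $\|\cdot\|$ on $\mathbb{R}^{d+1}$ and sets $A,B\subset\mathbb{R}^{d+1}$, $d_{H,\|\cdot\|}(A,B)=\max\{\sup_{\mathbf{y}\in B}\inf_{\mathbf{x}\in A}\|\mathbf{x}-\mathbf{y}\|,\sup_{\mathbf{x}\in A}\inf_{\mathbf{y}\in B}\|\mathbf{x}-\mathbf{y}\|\}$. *)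

From HB Require Import structures.
From mathcomp Require Import all_boot all_order all_algebra.
From mathcomp Require Import all_classical all_reals all_analysis.
Set Implicit Arguments. Unset Strict Implicit. Unset Printing Implicit Defensive.
Import Order.TTheory GRing.Theory Num.Theory.
Import numFieldNormedType.Exports.
Local Open Scope classical_set_scope.
Local Open Scope ring_scope.

(* Vectors of R^{d+1} are row vectors 'rV[R]_(d.+1); coordinate x_0 is
   x ord0 ord0 and coordinate x_{i+1} (i < d) is x ord0 (lift ord0 i). *)

Section Defs.
Context {R : realType} {dd : nat}.

(* Condition (H) on X = (X_1,...,X_d) (X i stands for X_{i+1}):
   each X_i is a random variable, a.s. nonnegative, with 0 < E X_i < oo. *)
Definition condH {dT : measure_display} {T : measurableType dT}
  (P : probability T R) (X : 'I_dd -> T -> R) : Prop :=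
  forall i, [/\ measurable_fun setT (X i),
                {ae P, forall w, 0 <= X i w},
                P.-integrable setT (EFin \o X i)
              & (0 < 'E_P[X i])%E].

Definition Fnorm_of {dT : measure_display} {T : measurableType dT}
  (P : probability T R) (X : 'I_dd -> T -> R) (x : 'rV[R]_(dd.+1)) : \bar R :=
  'E_P[fun w => \big[Num.max/`|x ord0 ord0|]_(i < dd)
                   (`|x ord0 (lift ord0 i)| * X i w)].

Definition is_Fnorm (N : 'rV[R]_(dd.+1) -> R) : Prop :=
  exists (dT : measure_display) (T : measurableType dT)
         (P : probability T R) (X : 'I_dd -> T -> R),
    condH P X /\ forall x, (N x)%:E = Fnorm_of P X x.

Definition is_norm (nu : 'rV[R]_(dd.+1) -> R) : Prop :=
  [/\ forall x y, nu (x + y) <= nu x + nu y,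
      forall (a : R) x, nu (a *: x) = `|a| * nu x
    & forall x, nu x = 0 -> x = 0].

Definition Splus (N : 'rV[R]_(dd.+1) -> R) : set 'rV[R]_(dd.+1) :=
  [set x : 'rV[R]_(dd.+1) | (forall i, 0 <= x ord0 i) /\ N x = 1].

Definition hausdorff (nu : 'rV[R]_(dd.+1) -> R) (A B : set 'rV[R]_(dd.+1))
  : \bar R :=
  maxe (ereal_sup [set ereal_inf [set (nu (x - y))%:E | x in A] | y in B])
       (ereal_sup [set ereal_inf [set (nu (x - y))%:E | y in B] | x in A]).

End Defs.

(* An F-norm N is a monotone norm: |x_j| <= |y_j| for every j implies
   N x <= N y.  Hence N x = N |x|, every point of S^+_N has norm at most
   sum_j 1 / N e_j, and |x| = N x *: y with y = |x| / N x in S^+_N, so N is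
   determined by S^+_N.  Every seminorm N is Lipschitz with constant
   sum_j N e_j.
   If F_n -> F pointwise, these constants are eventually bounded, so the
   convergence is uniform on bounded sets: a point of one sphere has norm close
   to 1 for the other F-norm, and rescaling it onto the other sphere moves it
   only a little.  Conversely, if the spheres converge, approximating
   e_j / F e_j by points of S^+_{F_n} gives F_n e_j <= 2 F e_j, and for y in
   S^+_F and a nearby z in S^+_{F_n}, |F_n y - 1| = |F_n y - F_n z| -> 0, so
   F_n x -> F x by homogeneity.  All norms on R^{d+1} being equivalent, the
   choice of the norm measuring the Hausdorff distance does not matter. *)

From HB Require Import structures.
From mathcomp Require Import all_boot all_order all_algebra.
From mathcomp Require Import all_classical all_reals all_analysis.
From mathcomp Require Import measurable_realfun finmap ring lra.
Import Order.TTheory GRing.Theory Num.Theory.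
Import numFieldNormedType.Exports.
Local Open Scope classical_set_scope.
Local Open Scope ring_scope.
Set Implicit Arguments. Unset Strict Implicit.

Section RowNorm.
Variables (R : realType) (m : nat).
Implicit Type x : 'rV[R]_m.

Lemma row_coord_le_norm x j : `|x ord0 j| <= `|x|.
Proof.
rewrite [leRHS]/Num.norm /= mx_normrE; apply/bigmax_geP; right => /=.
by exists (ord0, j).
Qed.

Lemma row_norm_le x c : 0 <= c -> (forall j, `|x ord0 j| <= c) -> `|x| <= c.
Proof.
move=> c0 xc; rewrite [leLHS]/Num.norm /= mx_normrE.
by apply: bigmax_le => // -[i j] _; rewrite /= (ord1 i).
Qed.

Lemma compact_row_norm_le (K : R) : compact [set x : 'rV[R]_m | `|x| <= K].
Proof.
apply: bounded_closed_compact.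
  rewrite /bounded_set /= /bounded_near; near=> M => x /= xK.
  by apply: le_trans xK _; near: M; apply: nbhs_pinfty_ge; exact: num_real.
apply: (@preimage_closed _ R (@Num.norm _ 'rV[R]_m) [set r : R | r <= K]).
  by move=> x _; exact: norm_continuous.
exact: closed_le.
Unshelve. all: by end_near.
Qed.

End RowNorm.

Section Seminorm.
Variables (R : realType) (n : nat).
Local Notation V := 'rV[R]_n.+1.
Implicit Types x y : V.

Definition seminorm (N : V -> R) :=
  (forall x y, N (x + y) <= N x + N y) /\ (forall (a : R) x, N (a *: x) = `|a| * N x).

Lemma seminormD N : seminorm N -> forall x y, N (x + y) <= N x + N y.
Proof. by case. Qed.

Lemma seminormZ N : seminorm N -> forall (a : R) x, N (a *: x) = `|a| * N x.
Proof. by case. Qed.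

Section SeminormTheory.
Variable N : V -> R.
Hypothesis N_seminorm : seminorm N.

Lemma seminorm0 : N 0 = 0.
Proof. by rewrite -(scale0r 0) (seminormZ N_seminorm) normr0 mul0r. Qed.

Lemma seminormN x : N (- x) = N x.
Proof. by rewrite -scaleN1r (seminormZ N_seminorm) normrN normr1 mul1r. Qed.

Lemma seminorm_ge0 x : 0 <= N x.
Proof.
have := seminormD N_seminorm x (- x).
rewrite subrr seminorm0 seminormN; lra.
Qed.

Lemma seminorm_sum (I : Type) (r : seq I) (P : pred I) (F : I -> V) :
  N (\sum_(i <- r | P i) F i) <= \sum_(i <- r | P i) N (F i).
Proof.
elim/big_rec2: _ => [|i y1 y2 _ IH]; first by rewrite seminorm0.
by apply: le_trans (seminormD N_seminorm _ _) _; rewrite lerD2l.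
Qed.

Lemma seminorm_le_norm x : N x <= `|x| * \sum_j N 'e_j.
Proof.
rewrite {1}(row_sum_delta x) mulr_sumr; apply: le_trans (seminorm_sum _ _ _) _.
apply: ler_sum => j _; rewrite (seminormZ N_seminorm).
by apply: ler_wpM2r; [exact: seminorm_ge0 | exact: row_coord_le_norm].
Qed.

Lemma seminorm_dist_le x y : `|N x - N y| <= `|x - y| * \sum_j N 'e_j.
Proof.
apply: le_trans (seminorm_le_norm (x - y)).
have Nx := seminormD N_seminorm (x - y) y; rewrite subrK in Nx.
have Ny := seminormD N_seminorm (y - x) x; rewrite subrK -opprB seminormN in Ny.
by rewrite ler_norml; apply/andP; split; lra.
Qed.

Lemma seminorm_continuous : continuous N.
Proof.
set C := \sum_j N 'e_j.
have C0 : 0 <= C by apply: sumr_ge0 => j _; exact: seminorm_ge0.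
move=> x; apply/(@cvgrPdist_lt _ _ _ (nbhs x) (nbhs_filter x)) => e e0.
have e1 : 0 < e / (C + 1) by rewrite divr_gt0 // ltr_wpDl.
near=> y.
have xy : `|x - y| < e / (C + 1).
  by near: y; exact: (@cvgr_dist_lt _ _ _ _ (nbhs_filter x) id x cvg_id _ e1).
apply: le_lt_trans (seminorm_dist_le x y) _.
rewrite ltr_pdivlMr ?ltr_wpDl // in xy.
by apply: le_lt_trans xy; rewrite ler_wpM2l // lerDl.
Unshelve. all: by end_near.
Qed.

End SeminormTheory.

Lemma definite_seminorm_ge nu : seminorm nu -> (forall x, nu x = 0 -> x = 0) ->
  exists2 c, 0 < c & forall x, c * `|x| <= nu x.
Proof.
move=> nu_seminorm nu_eq0.
pose S := [set x : V | `|x| = 1].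
have S_compact : compact S.
  apply: (@subclosed_compact _ S _ _ (@compact_row_norm_le R n.+1 1)) => [|x /= ->//].
  apply: (@preimage_closed V R (@Num.norm _ V) [set r : R | r = 1]); last exact: closed_eq.
  by move=> x _; exact: norm_continuous.
have S_e0 : S 'e_(0 : 'I_n.+1).
  apply/le_anti/andP; split; last first.
    by apply: le_trans (row_coord_le_norm _ 0); rewrite mxE !eqxx normr1.
  by apply: row_norm_le => // j; rewrite mxE; case: (_ && _); rewrite ?normr1 ?normr0.
have [c /set_mem Sc cmin] := compact_EVT_min (ex_intro _ _ S_e0) S_compact
  (continuous_subspaceT (seminorm_continuous nu_seminorm)).
exists (nu c).
  rewrite lt_def seminorm_ge0 // andbT; apply/eqP => /nu_eq0 c0.
  by move: Sc; rewrite /S /= c0 normr0 => /eqP; rewrite eq_sym oner_eq0.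
move=> x; have [->|x0] := eqVneq x 0; first by rewrite normr0 mulr0 seminorm0.
have nx : 0 < `|x| by rewrite normr_gt0.
have Sx : S (`|x|^-1 *: x) by rewrite /S /= normrZ normfV normr_id mulVf // gt_eqF.
have := cmin _ (mem_set Sx); rewrite (seminormZ nu_seminorm) normfV normr_id => cx.
by rewrite mulrC -ler_pdivlMl.
Qed.

End Seminorm.

Section UniformConvergence.
Variables (R : realType) (n : nat).
Local Notation V := 'rV[R]_n.+1.
Variables (Nk : nat -> V -> R) (N : V -> R).
Hypotheses (Nk_seminorm : forall k, seminorm (Nk k)) (N_seminorm : seminorm N).
Hypothesis Nk_cvg : forall x, Nk k x @[k --> \oo] --> N x.

Lemma seminorm_basis_sum_near :
  \forall k \near \oo, \sum_j Nk k 'e_j <= \sum_j N 'e_j + 1.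
Proof.
have sum_cvg : \sum_j Nk k 'e_j @[k --> \oo] --> \sum_j N 'e_j.
  by apply: cvg_big => //; exact: add_continuous.
near=> k.
have : `|\sum_j N 'e_j - \sum_j Nk k 'e_j| < 1.
  by near: k; exact: (cvgr_dist_lt _ _ sum_cvg _ ltr01).
by rewrite ltr_norml => /andP[? ?]; lra.
Unshelve. all: by end_near.
Qed.

Lemma seminorm_cvg_uniform (K eta : R) : 0 < eta ->
  \forall k \near \oo, forall x : V, `|x| <= K -> `|Nk k x - N x| <= eta.
Proof.
move=> eta0; set M := \sum_j N 'e_j + 1.
have M0 : 0 < M by rewrite ltr_wpDl // sumr_ge0 // => j _; exact: seminorm_ge0.
set r := eta / (3 * M).
have r0 : 0 < r by rewrite divr_gt0 // mulr_gt0.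
have rM : r * M = eta / 3 by rewrite /r; field; rewrite gt_eqF.
have [D _ D_cover] : finite_subset_cover [set x : V | `|x| <= K]
    (fun g => ball g r) [set x : V | `|x| <= K].
  move: (@compact_row_norm_le R n.+1 K); rewrite compact_cover.
  apply=> [g _|x Kx]; first exact: ball_open.
  by exists x => //; exact: ballxx.
have D_cvg : \forall k \near \oo, forall g : D, `|N (val g) - Nk k (val g)| < eta / 3.
  have eta3 : 0 < eta / 3 by rewrite divr_gt0.
  by apply: filter_forall => g; exact: (cvgr_dist_lt _ _ (@Nk_cvg (val g)) _ eta3).
near=> k => x xK.
have [g gD /= xg] := D_cover x xK; rewrite -ball_normE /= in xg.
have D_k : forall g : D, `|N (val g) - Nk k (val g)| < eta / 3.
  by near: k; exact: D_cvg.
have Ng := D_k (FSetSub gD).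
have Nk_M : \sum_j Nk k 'e_j <= M by near: k; exact: seminorm_basis_sum_near.
have N_M : \sum_j N 'e_j <= M by rewrite lerDl.
have Nk_xg : `|Nk k x - Nk k g| <= eta / 3.
  apply: le_trans (seminorm_dist_le (Nk_seminorm k) x g) _.
  rewrite -rM distrC; apply: ler_pM => //; last exact: ltW.
  by apply: sumr_ge0 => j _; exact: seminorm_ge0.
have N_gx : `|N g - N x| <= eta / 3.
  apply: le_trans (seminorm_dist_le N_seminorm g x) _.
  rewrite -rM; apply: ler_pM => //; last exact: ltW.
  by apply: sumr_ge0 => j _; exact: seminorm_ge0.
move: Nk_xg N_gx Ng; rewrite !ler_norml ltr_norml => /andP[? ?] /andP[? ?] /andP[? ?].
by apply/andP; split; lra.
Unshelve. all: by end_near.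
Qed.

End UniformConvergence.

Lemma inv_dist1_le (R : realFieldType) (a e : R) : e <= 1 / 2 -> `|a - 1| <= e ->
  `|a^-1 - 1| <= 2 * e.
Proof.
move=> e12; rewrite ler_norml => /andP[ae1 ae2].
have a0 : 0 < a by lra.
have -> : a^-1 - 1 = (1 - a) / a by field; rewrite gt_eqF.
rewrite normrM normfV (gtr0_norm a0) ler_pdivrMr //.
have : `|1 - a| <= e by rewrite ler_norml; apply/andP; split; lra.
have := normr_ge0 (1 - a); nra.
Qed.

Section MonotoneNorm.
Variables (R : realType) (n : nat).
Local Notation V := 'rV[R]_n.+1.
Implicit Types x y : V.

Definition monotone_norm (N : V -> R) :=
  [/\ seminorm N, (forall x y, (forall j, `|x ord0 j| <= `|y ord0 j|) -> N x <= N y)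
    & forall j, 0 < N 'e_j].

Lemma Splus_normalize N x : seminorm N -> (forall i, 0 <= x ord0 i) -> 0 < N x ->
  Splus N ((N x)^-1 *: x).
Proof.
move=> N_seminorm x_ge0 Nx_gt0; split => [i|].
  by rewrite mxE mulr_ge0 // invr_ge0 ltW.
by rewrite (seminormZ N_seminorm) ger0_norm ?invr_ge0 ?ltW // mulVf // gt_eqF.
Qed.

Lemma Splus_rescale N nu x (e K : R) : seminorm N -> seminorm nu ->
  (forall i, 0 <= x ord0 i) -> `|x| <= K -> e <= 1 / 2 -> `|N x - 1| <= e ->
  exists2 z, Splus N z & nu (z - x) <= 2 * e * K * \sum_j nu 'e_j.
Proof.
move=> N_seminorm nu_seminorm x_ge0 xK e12 Nx1.
have Nx_gt0 : 0 < N x by move: Nx1; rewrite ler_norml => /andP[? ?]; lra.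
exists ((N x)^-1 *: x); first exact: Splus_normalize.
have -> : (N x)^-1 *: x - x = ((N x)^-1 - 1) *: x by rewrite scalerBl scale1r.
rewrite (seminormZ nu_seminorm) -mulrA.
apply: ler_pM => //; first exact: seminorm_ge0.
  exact: inv_dist1_le.
apply: le_trans (seminorm_le_norm nu_seminorm x) _.
by apply: ler_wpM2r => //; apply: sumr_ge0 => j _; exact: seminorm_ge0.
Qed.

Section MonotoneNormTheory.
Variable N : V -> R.
Hypothesis N_monotone : monotone_norm N.

Lemma monotone_norm_seminorm : seminorm N.
Proof. by case: N_monotone. Qed.

Lemma monotone_norm_basis_gt0 j : 0 < N 'e_j.
Proof. by case: N_monotone. Qed.

Lemma monotone_norm_coord_le x j : `|x ord0 j| * N 'e_j <= N x.
Proof.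
case: N_monotone => [[_ NZ] N_mono _]; rewrite -NZ; apply: N_mono => k.
rewrite !mxE eqxx andTb; case: eqVneq => [->|_]; first by rewrite mulr1.
by rewrite mulr0 normr0.
Qed.

Lemma monotone_norm_abs x : N (map_mx Num.norm x) = N x.
Proof.
case: N_monotone => [_ N_mono _].
by apply/le_anti/andP; split; apply: N_mono => j; rewrite mxE normr_id.
Qed.

Lemma monotone_norm_eq0 x : N x = 0 -> x = 0.
Proof.
move=> Nx0; apply/rowP => j; rewrite mxE; apply/eqP; rewrite -normr_le0.
have := monotone_norm_coord_le x j; rewrite Nx0.
by rewrite pmulr_lle0 // monotone_norm_basis_gt0.
Qed.

Lemma Splus_basis j : Splus N ((N 'e_j)^-1 *: 'e_j).
Proof.
apply: Splus_normalize monotone_norm_seminorm _ (monotone_norm_basis_gt0 j) => i.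
by rewrite mxE; case: (_ && _).
Qed.

Lemma Splus_coord_le x j : Splus N x -> `|x ord0 j| * N 'e_j <= 1.
Proof. by move=> [_ <-]; exact: monotone_norm_coord_le. Qed.

Lemma Splus_norm_le x : Splus N x -> `|x| <= \sum_j (N 'e_j)^-1.
Proof.
move=> Sx; apply: row_norm_le => [|j].
  by apply: sumr_ge0 => j _; rewrite invr_ge0 ltW // monotone_norm_basis_gt0.
rewrite (bigD1 j) //= -[leLHS]addr0 lerD //; last first.
  by apply: sumr_ge0 => i _; rewrite invr_ge0 ltW // monotone_norm_basis_gt0.
by rewrite -div1r ler_pdivlMr ?monotone_norm_basis_gt0 // Splus_coord_le.
Qed.

End MonotoneNormTheory.

End MonotoneNorm.

Lemma cvge0_near_le {R : realType} {T : Type} {F : set_system T} {FF : Filter F}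
    (h : T -> \bar R) :
  (forall e : R, 0 < e -> \forall t \near F, (0 <= h t <= e%:E)%E) -> h @ F --> 0%E.
Proof.
move=> h_small; have h_fin (e : R) : 0 < e -> \forall t \near F, h t \is a fin_num.
  move=> e0; apply: filterS (h_small e e0) => t /andP[h0 he].
  by rewrite ge0_fin_numE // (le_lt_trans he) // ltry.
apply/fine_cvgP; split; first exact: h_fin ltr01.
apply/cvgrPdist_le => e e0; apply: filterS2 (h_small e e0) (h_fin e e0).
move=> t /andP[h0 he] /fineK ht; rewrite sub0r normrN ger0_norm.
  by rewrite -lee_fin ht.
by rewrite -lee_fin ht.
Qed.

Section Hausdorff.
Variables (R : realType) (n : nat).
Local Notation V := 'rV[R]_n.+1.
Variable nu : V -> R.
Implicit Types A B : set V.

Lemma hausdorff_le A B e :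
  (forall y, B y -> exists2 x, A x & nu (x - y) <= e) ->
  (forall x, A x -> exists2 y, B y & nu (x - y) <= e) ->
  (hausdorff nu A B <= e%:E)%E.
Proof.
move=> AB BA; rewrite /hausdorff ge_max; apply/andP; split;
  apply: ge_ereal_sup => _ [z Bz <-]; apply: ge_ereal_inf.
- by have [x Ax xz] := AB _ Bz; exists (nu (x - z))%:E => //; exists x.
- by have [y By zy] := BA _ Bz; exists (nu (z - y))%:E => //; exists y.
Qed.

Lemma hausdorff_ge0 A B : (forall x, 0 <= nu x) -> B !=set0 -> (0 <= hausdorff nu A B)%E.
Proof.
move=> nu_ge0 [y By]; rewrite /hausdorff le_max; apply/orP; left.
apply: le_ereal_sup_tmp; exists (ereal_inf [set (nu (x - y))%:E | x in A]).
  by exists y.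
by apply: le_ereal_inf_tmp => _ [x _ <-]; rewrite lee_fin.
Qed.

Lemma hausdorff_lt A B e y : (hausdorff nu A B < e%:E)%E -> B y ->
  exists2 x, A x & nu (x - y) < e.
Proof.
rewrite /hausdorff gt_max => /andP[AB _] By.
have : (ereal_inf [set (nu (x - y))%:E | x in A] < e%:E)%E.
  apply: le_lt_trans AB; apply: le_ereal_sup_tmp.
  by exists (ereal_inf [set (nu (x - y))%:E | x in A]) => //; exists y.
by move=> /ereal_inf_lt [_ [x Ax <-]]; rewrite lte_fin => ?; exists x.
Qed.

Context {T : Type} {F : set_system T} {FF : Filter F}.
Variables A B : T -> set V.

Lemma hausdorff_cvg0 : (forall x, 0 <= nu x) -> (forall t, B t !=set0) ->
  (forall e, 0 < e -> \forall t \near F,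
    (forall y, B t y -> exists2 x, A t x & nu (x - y) <= e) /\
    (forall x, A t x -> exists2 y, B t y & nu (x - y) <= e)) ->
  hausdorff nu (A t) (B t) @[t --> F] --> 0%E.
Proof.
move=> nu_ge0 B0 AB; apply: cvge0_near_le => e e0.
apply: filterS (AB e e0) => t [ABt BAt].
by rewrite hausdorff_ge0 ?hausdorff_le.
Qed.

Lemma hausdorff_cvg0_approx : seminorm nu -> (forall x, nu x = 0 -> x = 0) ->
  hausdorff nu (A t) (B t) @[t --> F] --> 0%E ->
  forall e, 0 < e -> \forall t \near F, forall y, B t y -> exists2 x, A t x & `|x - y| < e.
Proof.
move=> nu_seminorm nu_eq0 AB0 e e0.
have [c c0 c_le] := definite_seminorm_ge nu_seminorm nu_eq0.
have /AB0 ABe : nbhs (0 : \bar R) [set y | (y < (c * e)%:E)%E].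
  apply: open_nbhs_nbhs; split; first exact: open_ereal_lt_ereal.
  by rewrite /= lte_fin mulr_gt0.
near=> t => y By.
have ABt : (hausdorff nu (A t) (B t) < (c * e)%:E)%E by near: t; exact: ABe.
have [x Ax xy] := hausdorff_lt ABt By.
by exists x => //; rewrite -(ltr_pM2l c0); apply: le_lt_trans (c_le _) xy.
Unshelve. all: by end_near.
Qed.

End Hausdorff.

Lemma measurable_bigmaxr {R : realType} {dT : measure_display} {T : measurableType dT}
    (I : Type) (r : seq I) (c : R) (g : I -> T -> R) :
  (forall i, measurable_fun setT (g i)) ->
  measurable_fun setT (fun w => \big[Num.max/c]_(i <- r) g i w).
Proof.
move=> mg; elim: r => [|i r IH].
  by under eq_fun do rewrite big_nil; exact: measurable_cst.
by under eq_fun do rewrite big_cons; exact: measurable_maxr.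
Qed.

Section Fnorm.
Context {R : realType} {d : nat} {dT : measure_display} {T : measurableType dT}.
Variables (P : probability T R) (X : 'I_d -> T -> R).
Hypothesis X_condH : condH P X.
Local Notation V := 'rV[R]_d.+1.
Implicit Types x y : V.

Let maxX x w := \big[Num.max/`|x ord0 ord0|]_(i < d) (`|x ord0 (lift ord0 i)| * X i w).

Let X_ge0 : {ae P, forall w i, 0 <= X i w}.
Proof. by apply: filter_forall => i; case: (X_condH i). Qed.

Let maxX_ge0 x w : 0 <= maxX x w.
Proof. exact: le_trans (bigmax_ge_id _ _ _ _). Qed.

Let measurable_maxX x : measurable_fun setT (fun w => (maxX x w)%:E).
Proof.
apply/measurable_EFinP; apply: measurable_bigmaxr => i.
by apply: measurable_funM; [exact: measurable_cst | case: (X_condH i)].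
Qed.

Let Fnorm_ofE x : Fnorm_of P X x = (\int[P]_w (maxX x w)%:E)%E.
Proof. by rewrite /Fnorm_of unlock. Qed.

Lemma Fnorm_ofZ (a : R) x : Fnorm_of P X (a *: x) = (`|a|%:E * Fnorm_of P X x)%E.
Proof.
rewrite !Fnorm_ofE -ge0_integralZl_EFin //; last by move=> w _; rewrite lee_fin.
apply: eq_integral => w _; rewrite -EFinM; congr (_%:E).
have maxZ : {morph *%R `|a| : u v / Num.max u v}.
  by move=> u v; rewrite maxr_pMr.
rewrite /maxX mxE normrM (big_morph _ maxZ (erefl _)).
by apply: eq_bigr => i _; rewrite mxE normrM mulrA.
Qed.

Lemma Fnorm_ofD x y : (Fnorm_of P X (x + y) <= Fnorm_of P X x + Fnorm_of P X y)%E.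
Proof.
rewrite !Fnorm_ofE -ge0_integralD //; try by move=> w _; rewrite lee_fin.
apply: ae_ge0_le_integral => //.
- by move=> w _; rewrite lee_fin.
- by move=> w _; rewrite adde_ge0 // lee_fin.
- exact: emeasurable_funD.
apply: filterS X_ge0 => w Xw _; rewrite -EFinD lee_fin.
apply: bigmax_le => [|i _]; rewrite mxE.
  by apply: le_trans (ler_normD _ _) _; apply: lerD; exact: bigmax_ge_id.
apply: le_trans (ler_wpM2r (Xw i) (ler_normD _ _)) _.
rewrite mulrDl; apply: lerD; exact: (le_bigmax _ (fun i => _ * X i w) i).
Qed.

Lemma Fnorm_of_le x y : (forall j, `|x ord0 j| <= `|y ord0 j|) ->
  (Fnorm_of P X x <= Fnorm_of P X y)%E.
Proof.
move=> xy; rewrite !Fnorm_ofE; apply: ae_ge0_le_integral => //.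
- by move=> w _; rewrite lee_fin.
- by move=> w _; rewrite lee_fin.
apply: filterS X_ge0 => w Xw _; rewrite lee_fin.
apply: bigmax_le => [|i _]; first exact: le_trans (xy _) (bigmax_ge_id _ _ _ _).
apply: le_trans (le_bigmax _ (fun k => `|y ord0 (lift ord0 k)| * X k w) i).
by apply: ler_wpM2r; [exact: Xw | exact: xy].
Qed.

Lemma Fnorm_of_basis_lift i : Fnorm_of P X 'e_(lift ord0 i) = ('E_P[X i])%E.
Proof.
rewrite Fnorm_ofE unlock; apply: ae_eq_integral => //.
  by apply/measurable_EFinP; case: (X_condH i).
apply: filterS X_ge0 => w Xw _; congr (_%:E).
have eE k : `|('e_(lift ord0 i) : V) ord0 (lift ord0 k)| = (k == i)%:R.
  by rewrite mxE eqxx (inj_eq lift_inj); case: (k == i); rewrite ?normr1 ?normr0.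
apply/le_anti/andP; split.
  apply: bigmax_le => [|k _]; first by rewrite mxE normr0.
  by rewrite eE; case: eqP => [->|_]; rewrite ?mul1r ?mul0r.
apply: le_trans (le_bigmax _ (fun k => `|'e_(lift ord0 i) ord0 (lift ord0 k)| * X k w) i).
by rewrite /= eE eqxx mul1r.
Qed.

Lemma Fnorm_of_basis0 : Fnorm_of P X 'e_ord0 = 1%E.
Proof.
have maxX1 w : maxX 'e_ord0 w = 1.
  apply/le_anti/andP; split.
    by apply: bigmax_le => [|k _]; rewrite !mxE ?eqxx ?normr1 // normr0 mul0r.
  by apply: le_trans (bigmax_ge_id _ _ _ _); rewrite mxE eqxx normr1.
have -> : Fnorm_of P X 'e_ord0 = ('E_P[cst 1%R])%E.
  by rewrite /Fnorm_of; congr expectation; apply: funext => w; exact: maxX1.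
exact: expectation_cst.
Qed.

Lemma Fnorm_of_basis_gt0 j : (0 < Fnorm_of P X 'e_j)%E.
Proof.
case: (unliftP ord0 j) => [i ->|->]; last by rewrite Fnorm_of_basis0 lte01.
by rewrite Fnorm_of_basis_lift; case: (X_condH i).
Qed.

End Fnorm.

Lemma is_Fnorm_monotone_norm (R : realType) (d : nat) (N : 'rV[R]_d.+1 -> R) :
  is_Fnorm N -> monotone_norm N.
Proof.
case=> dT [T [P [X [X_condH NE]]]]; split; first split.
- by move=> x y; rewrite -lee_fin EFinD !NE; exact: Fnorm_ofD.
- by move=> a x; apply/eqP; rewrite -eqe EFinM !NE Fnorm_ofZ.
- by move=> x y xy; rewrite -lee_fin !NE; exact: Fnorm_of_le.
- by move=> j; rewrite -lte_fin NE; exact: Fnorm_of_basis_gt0.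
Qed.

Section PointwiseFromApprox.
Variables (R : realType) (n : nat).
Local Notation V := 'rV[R]_n.+1.
Variables (Fn : nat -> V -> R) (F : V -> R).
Hypotheses (Fn_monotone : forall k, monotone_norm (Fn k)) (F_monotone : monotone_norm F).
Hypothesis Splus_approx : forall e, 0 < e ->
  \forall k \near \oo, forall y, Splus F y -> exists2 z, Splus (Fn k) z & `|z - y| < e.

Lemma basis_le_twice_near : \forall k \near \oo, forall j, Fn k 'e_j <= 2 * F 'e_j.
Proof.
apply: filter_forall => j.
have Fj0 := monotone_norm_basis_gt0 F_monotone j.
set b := (2 * F 'e_j)^-1.
have b0 : 0 < b by rewrite invr_gt0 mulr_gt0.
have Fj_inv : (F 'e_j)^-1 = 2 * b by rewrite /b invfM mulrA mulfV ?mul1r ?pnatr_eq0.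
near=> k.
have [z Sz zy] : exists2 z, Splus (Fn k) z & `|z - (F 'e_j)^-1 *: 'e_j| < b.
  by near: k; apply: filterS (Splus_approx b0) => k; apply; exact: Splus_basis.
have zj : b <= `|z ord0 j|.
  move: (le_lt_trans (row_coord_le_norm _ j) zy); rewrite !mxE !eqxx mulr1 Fj_inv.
  by rewrite ltr_norml => /andP[? ?]; have := ler_norm (z ord0 j); lra.
have := le_trans (ler_wpM2r (ltW (monotone_norm_basis_gt0 (Fn_monotone k) j)) zj)
  (Splus_coord_le (Fn_monotone k) j Sz).
by rewrite /b mulrC ler_pdivrMr ?mulr_gt0 // mul1r.
Unshelve. all: by end_near.
Qed.

Lemma Splus_cvg1 y : Splus F y -> Fn k y @[k --> \oo] --> (1 : R).
Proof.
move=> Sy; set M := \sum_j 2 * F 'e_j.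
have M0 : 0 < M + 1.
  rewrite ltr_wpDl // sumr_ge0 // => j _.
  by rewrite mulr_ge0 // ltW // monotone_norm_basis_gt0.
apply/cvgrPdist_le => e e0.
have eM : 0 < e / (M + 1) by rewrite divr_gt0.
near=> k.
have [z [_ Fz1] zy] : exists2 z, Splus (Fn k) z & `|z - y| < e / (M + 1).
  by near: k; apply: filterS (Splus_approx eM) => k; apply.
have sum_le : \sum_j Fn k 'e_j <= M + 1.
  have : forall j, Fn k 'e_j <= 2 * F 'e_j by near: k; exact: basis_le_twice_near.
  by move=> Fk; apply: le_trans (ler_sum _ (fun j _ => Fk j)) _; rewrite lerDl.
have Fnk_seminorm := monotone_norm_seminorm (Fn_monotone k).
rewrite -Fz1; apply: le_trans (seminorm_dist_le Fnk_seminorm z y) _.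
rewrite -[e](@divfK _ (M + 1)) ?gt_eqF //; apply: ler_pM => //; last exact: ltW.
by apply: sumr_ge0 => j _; exact: ltW (monotone_norm_basis_gt0 (Fn_monotone k) j).
Unshelve. all: by end_near.
Qed.

Lemma Splus_approx_cvg x : Fn k x @[k --> \oo] --> F x.
Proof.
have F_seminorm := monotone_norm_seminorm F_monotone.
have [->|x0] := eqVneq x 0.
  rewrite (seminorm0 F_seminorm).
  under eq_cvg do rewrite (seminorm0 (monotone_norm_seminorm (Fn_monotone _))).
  exact: cvg_cst.
have Fx0 : 0 < F x.
  rewrite lt_def seminorm_ge0 // andbT; apply: contra_neq x0.
  exact: monotone_norm_eq0.
set ax := map_mx Num.norm x.
have ax_ge0 i : 0 <= ax ord0 i by rewrite mxE.
have := Splus_normalize F_seminorm ax_ge0; rewrite monotone_norm_abs // => /(_ Fx0) Sy.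
have Fn_x k : Fn k x = F x * Fn k ((F x)^-1 *: ax).
  rewrite (seminormZ (monotone_norm_seminorm (Fn_monotone k))) monotone_norm_abs //.
  by rewrite gtr0_norm ?invr_gt0 // mulrA mulfV ?gt_eqF ?mul1r.
under eq_cvg do rewrite Fn_x.
by apply: cvg_trans (cvgMr (Splus_cvg1 Sy)) _; rewrite mulr1.
Qed.

End PointwiseFromApprox.

Section ApproxFromPointwise.
Variables (R : realType) (n : nat).
Local Notation V := 'rV[R]_n.+1.
Variables (Fn : nat -> V -> R) (F nu : V -> R).
Hypotheses (Fn_monotone : forall k, monotone_norm (Fn k)) (F_monotone : monotone_norm F).
Hypothesis nu_seminorm : seminorm nu.
Hypothesis Fn_cvg : forall x, Fn k x @[k --> \oo] --> F x.

Let K := \sum_j 2 / F 'e_j.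

Lemma Splus_norm_le_near :
  \forall k \near \oo, forall x, Splus (Fn k) x \/ Splus F x -> `|x| <= K.
Proof.
have Fj0 := monotone_norm_basis_gt0 F_monotone.
have basis_ge : \forall k \near \oo, forall j, F 'e_j / 2 <= Fn k 'e_j.
  apply: filter_forall => j; near=> k.
  have : `|F 'e_j - Fn k 'e_j| < F 'e_j / 2.
    by near: k; apply: (cvgr_dist_lt _ _ (@Fn_cvg 'e_j)); rewrite divr_gt0.
  by rewrite ltr_norml => /andP[? ?]; lra.
near=> k.
have Fk : forall j, F 'e_j / 2 <= Fn k 'e_j by near: k; exact: basis_ge.
move=> x [Sx|Sx]; [apply: le_trans (Splus_norm_le (Fn_monotone k) Sx) _
                  | apply: le_trans (Splus_norm_le F_monotone Sx) _];
  apply: ler_sum => j _.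
  by rewrite -invf_div lef_pV2 ?posrE ?divr_gt0 // (lt_le_trans _ (Fk j)) ?divr_gt0.
by rewrite ler_peMl ?invr_ge0 ?(ltW (Fj0 j)) ?ler1n.
Unshelve. all: by end_near.
Qed.

Lemma Splus_close_near e : 0 < e -> \forall k \near \oo,
  (forall y, Splus F y -> exists2 x, Splus (Fn k) x & nu (x - y) <= e) /\
  (forall x, Splus (Fn k) x -> exists2 y, Splus F y & nu (x - y) <= e).
Proof.
move=> e0; set C := \sum_j nu 'e_j.
have C0 : 0 <= C by apply: sumr_ge0 => j _; exact: seminorm_ge0.
have K0 : 0 <= K.
  by apply: sumr_ge0 => j _; rewrite divr_ge0 // ltW // monotone_norm_basis_gt0.
set eta := Num.min (1 / 2) (e / (2 * K * C + 1)).
have D0 : 0 < 2 * K * C + 1 by rewrite ltr_wpDl // !mulr_ge0.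
have eta0 : 0 < eta by rewrite lt_min; apply/andP; split; [lra | exact: divr_gt0].
have eta12 : eta <= 1 / 2 by rewrite ge_min lexx.
have eta_e : 2 * eta * K * C <= e.
  have : eta * (2 * K * C + 1) <= e by rewrite -ler_pdivlMr // ge_min lexx orbT.
  have : 0 <= eta * (2 * K * C) by rewrite !mulr_ge0 // ltW.
  lra.
near=> k.
have xK : forall x, Splus (Fn k) x \/ Splus F x -> `|x| <= K.
  by near: k; exact: Splus_norm_le_near.
have Fn_F : forall x, `|x| <= K -> `|Fn k x - F x| <= eta.
  near: k; apply: seminorm_cvg_uniform => //; last exact: monotone_norm_seminorm.
  by move=> k; exact: monotone_norm_seminorm.
split=> [y [y_ge0 Fy1] | x [x_ge0 Fnx1]].
  have yK := xK y (or_intror (conj y_ge0 Fy1)).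
  have Fny : `|Fn k y - 1| <= eta by rewrite -Fy1; exact: Fn_F.
  have [x Sx xy] := Splus_rescale (monotone_norm_seminorm (Fn_monotone k)) nu_seminorm
    y_ge0 yK eta12 Fny.
  by exists x => //; exact: le_trans eta_e.
have x_K := xK x (or_introl (conj x_ge0 Fnx1)).
have Fx : `|F x - 1| <= eta by rewrite -Fnx1 distrC; exact: Fn_F.
have [y Sy yx] := Splus_rescale (monotone_norm_seminorm F_monotone) nu_seminorm
  x_ge0 x_K eta12 Fx.
by exists y => //; rewrite -opprB seminormN //; exact: le_trans eta_e.
Unshelve. all: by end_near.
Qed.

Lemma hausdorff_Splus_cvg0 :
  hausdorff nu (Splus (Fn k)) (Splus F) @[k --> \oo] --> 0%E.
Proof.
apply: hausdorff_cvg0; last exact: Splus_close_near.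
  exact: seminorm_ge0.
by move=> _; exists ((F 'e_ord0)^-1 *: 'e_ord0); exact: Splus_basis.
Qed.

End ApproxFromPointwise.

Unset Implicit Arguments.

Theorem theorem6p4 (R : realType) (d : nat)
  (Fn : nat -> 'rV[R]_(d.+1) -> R) (F : 'rV[R]_(d.+1) -> R) :
  (forall n, is_Fnorm (Fn n)) -> is_Fnorm F ->
  forall nu : 'rV[R]_(d.+1) -> R, is_norm nu ->
  ((forall x : 'rV[R]_(d.+1), (fun n => Fn n x) @ \oo --> F x) <->
   ((fun n => hausdorff nu (Splus (Fn n)) (Splus F)) @ \oo --> 0%E)).
Proof.
move=> Fn_Fnorm F_Fnorm nu [nuD nuZ nu_eq0].
have Fn_monotone k := is_Fnorm_monotone_norm (Fn_Fnorm k).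
have F_monotone := is_Fnorm_monotone_norm F_Fnorm.
have nu_seminorm : seminorm nu by split.
split=> [Fn_cvg | haus_cvg0].
  exact: hausdorff_Splus_cvg0.
apply: Splus_approx_cvg => // e e0.
exact: hausdorff_cvg0_approx.
Qed.
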